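(* Let $G$ be a permutation group, $K$ a smooth $G$-field and $n>0$ an integer. Put $k:=K^G$ and $\mu_n:=\{z\in K^\times:z^n=1\}$. Then there is a natural exact sequence $$H^1_{\mathrm{cont}}(G,\mu_n)\to{}_n\mathrm{Pic}_K(G)\to(K^\times/K^{\times n})^G/k^\times\to H^2_{\mathrm{cont}}(G,\mu_n).$$ Moreover, if $G$ has no proper open subgroups of finite index, then every invertible object $\mathcal L$ of $\mathrm{Sm}_K(G)$ of order $n$ in $\mathrm{Pic}_K(G)$ is contained in a $G$-field $K(a^{1/n})$ for some $a$ whose class in $K^\times/K^{\times n}$ is $G$-invariant.
   Context: A permutation group is a Hausdorff topological group admitting a base of open sets consisting of left and right translates of subgroups. A smooth $G$-field is a field with a $G$-action by automorphisms with open stabilizers of all elements. $\mathrm{Sm}_K(G)$ is the category of smooth left modules over the skew group ring $K\langle G\rangle$ ($(a[g])(b[h])=ab^g[gh]$), a tensor category under $\otimes_K$ with unit $K$. An object is invertible if it is one-dimensional over $K$; $\mathrm{Pic}_K(G)$ is the group of isomorphism classes of invertible objects under $\otimes_K$ (equal to $H^1_{\mathrm{cont}}(G,K^\times)$), and ${}_n\mathrm{Pic}_K(G)$ its $n$-torsion subgroup. $H^i_{\mathrm{cont}}$ is continuous cohomology with discrete coefficients; $\mu_n$ carries the restricted $G$-action. $k^\times$ maps to $(K^\times/K^{\times n})^G$ via inclusion. ''$\mathcal L$ is contained in $K(a^{1/n})$'' means $\mathcal L$ embeds $G$-equivariantly as a $K$-subspace of a $G$-field extension $K(a^{1/n})$.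 *)

From HB Require Import structures.
From Stdlib Require List.
From mathcomp Require Import all_boot all_algebra.
Set Implicit Arguments. Unset Strict Implicit. Unset Printing Implicit Defensive.
Import GRing.Theory.
Local Open Scope ring_scope.

Record permGroup := PermGroup {
  pg_sort :> Type;
  pg_mul : pg_sort -> pg_sort -> pg_sort;
  pg_one : pg_sort;
  pg_inv : pg_sort -> pg_sort;
  pg_mulA : forall x y z, pg_mul x (pg_mul y z) = pg_mul (pg_mul x y) z;
  pg_mul1 : forall x, pg_mul pg_one x = x;
  pg_mulV : forall x, pg_mul (pg_inv x) x = pg_one;
  pg_open : (pg_sort -> Prop) -> Prop;
  pg_open_setT : pg_open (fun _ => True);
  pg_open_union : forall (I : Type) (F : I -> pg_sort -> Prop),
    (forall i, pg_open (F i)) -> pg_open (fun x => exists i, F i x);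
  pg_open_inter : forall U V, pg_open U -> pg_open V ->
    pg_open (fun x => U x /\ V x);
  pg_mul_cont : forall W x y, pg_open W -> W (pg_mul x y) ->
    exists U V, [/\ pg_open U, pg_open V, U x, V y &
                    forall u v, U u -> V v -> W (pg_mul u v)];
  pg_inv_cont : forall W x, pg_open W -> W (pg_inv x) ->
    exists U, [/\ pg_open U, U x & forall u, U u -> W (pg_inv u)];
  pg_hausdorff : forall x y, x <> y ->
    exists U V, [/\ pg_open U, pg_open V, U x, V y &
                    forall z, ~ (U z /\ V z)];
  pg_base : forall W x, pg_open W -> W x ->
    exists (H : pg_sort -> Prop) (y : pg_sort),
      [/\ H pg_one, (forall a b, H a -> H b -> H (pg_mul a b)),
          (forall a, H a -> H (pg_inv a)) &
          (let L := fun z => exists h, H h /\ z = pg_mul y h in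
           let R := fun z => exists h, H h /\ z = pg_mul h y in
           (pg_open L /\ L x /\ forall z, L z -> W z) \/
           (pg_open R /\ R x /\ forall z, R z -> W z))]
}.

Arguments pg_mul {p}.
Arguments pg_one {p}.
Arguments pg_inv {p}.
Arguments pg_open {p}.

Definition is_subgroup (G : permGroup) (H : G -> Prop) :=
  [/\ H pg_one, (forall a b, H a -> H b -> H (pg_mul a b)) &
      (forall a, H a -> H (pg_inv a))].

Definition finite_index (G : permGroup) (H : G -> Prop) :=
  exists l : list G, forall g : G, exists r, List.In r l /\ H (pg_mul (pg_inv r) g).

Definition no_proper_open_finite_index (G : permGroup) :=
  forall H : G -> Prop, is_subgroup H -> pg_open H -> finite_index H ->
    forall g, H g.

(* (g (h x) = (gh) x, matching (a[g])(b[h]) = a b^g [gh].)                  *)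
(* Bijectivity of each act g follows from the action axioms.                *)
Record GField (G : permGroup) := GFieldPack {
  gf_sort :> fieldType;
  gf_act : G -> gf_sort -> gf_sort;
  gf_actD : forall g x y, gf_act g (x + y) = gf_act g x + gf_act g y;
  gf_actM : forall g x y, gf_act g (x * y) = gf_act g x * gf_act g y;
  gf_act1r : forall g, gf_act g 1 = 1;
  gf_act1 : forall x, gf_act pg_one x = x;
  gf_actMg : forall g h x, gf_act (pg_mul g h) x = gf_act g (gf_act h x)
}.
Arguments gf_act {G}.

Definition smoothGF (G : permGroup) (K : GField G) :=
  forall x : K, pg_open (fun g => gf_act K g x = x).

Section Cohomology.
Variables (G : permGroup) (K : GField G) (n : nat).
Local Notation act := (gf_act K).
Local Notation mul := (@pg_mul G).

(* continuity into a discrete space = local constancy *)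
Definition loc_const1 (T : Type) (f : G -> T) :=
  forall g, exists U, [/\ pg_open U, U g & forall u, U u -> f u = f g].
Definition loc_const2 (T : Type) (f : G -> G -> T) :=
  forall g h, exists U V, [/\ pg_open U, pg_open V, U g, V h &
                             forall u v, U u -> V v -> f u v = f g h].

Definition unitsK : K -> Prop := fun x => x != 0.
Definition mu_n : K -> Prop := fun x => x ^+ n = 1.

Definition cocycle1 (P : K -> Prop) (c : G -> K) :=
  [/\ loc_const1 c, (forall g, P (c g)) &
      forall g h, c (mul g h) = c g * act g (c h)].
Definition cohom1 (P : K -> Prop) (c c' : G -> K) :=
  exists b, P b /\ forall g, c' g = c g * (act g b / b).
Definition cobound1 (P : K -> Prop) (c : G -> K) := cohom1 P (fun _ => 1) c.

Definition cocycle2 (P : K -> Prop) (z : G -> G -> K) :=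
  [/\ loc_const2 z, (forall g h, P (z g h)) &
      forall g h l, act g (z h l) * z g (mul h l) = z (mul g h) l * z g h].
Definition cohom2 (P : K -> Prop) (z z' : G -> G -> K) :=
  exists e : G -> K, [/\ loc_const1 e, (forall g, P (e g)) &
     forall g h, z' g h = z g h * (e g * act g (e h) / e (mul g h))].
Definition cobound2 (P : K -> Prop) (z : G -> G -> K) :=
  cohom2 P (fun _ _ => 1) z.

(* representatives of nPic_K(G) = n-torsion of H^1_cont(G, K^x) *)
Definition npic (c : G -> K) :=
  cocycle1 unitsK c /\ cobound1 unitsK (fun g => c g ^+ n).

(* representatives of (K^x / K^xn)^G *)
Definition ginv_class (a : K) :=
  a != 0 /\ forall g, exists d : K, d != 0 /\ act g a = a * d ^+ n.

(* equality in (K^x/K^xn)^G / k^x, where k = K^G *)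
Definition qeq (a a' : K) :=
  exists t d : K, [/\ t != 0, (forall g, act g t = t), d != 0 &
                     a' = a * t * d ^+ n].

(* the natural map nPic -> (K^x/K^xn)^G/k^x on representatives:
   [c] |-> [a] where c(g)^n = g(a)/a *)
Definition kummer_map (c : G -> K) (a : K) :=
  a != 0 /\ forall g, c g ^+ n = act g a / a.

(* the natural map (K^x/K^xn)^G/k^x -> H^2(G, mu_n) on representatives:
   [a] |-> [(g,h) |-> e(g) g(e(h)) / e(gh)], e continuous, e(g)^n = g(a)/a *)
Definition obstruction_map (a : K) (z : G -> G -> K) :=
  exists e : G -> K, [/\ loc_const1 e, (forall g, e g != 0),
     (forall g, e g ^+ n = act g a / a) &
     forall g h, z g h = e g * act g (e h) / e (mul g h)].

Definition kummer_exact_sequence :=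
  (* first map: inclusion of mu_n-cocycles; well defined *)
  (forall c, cocycle1 mu_n c -> npic c) /\
      (forall c c', cohom1 mu_n c c' -> cohom1 unitsK c c') /\
  (* second map: well defined, total, homomorphism *)
      (forall c, npic c -> exists a, kummer_map c a) /\
      (forall c a, npic c -> kummer_map c a -> ginv_class a) /\
      (forall c c' a a', npic c -> npic c' -> cohom1 unitsK c c' ->
          kummer_map c a -> kummer_map c' a' -> qeq a a') /\
      (forall c c' a a', kummer_map c a -> kummer_map c' a' ->
          kummer_map (fun g => c g * c' g) (a * a')) /\
  (* third map: well defined, total, homomorphism *)
      (forall a, ginv_class a -> exists z, obstruction_map a z /\ cocycle2 mu_n z) /\
      (forall a a' z z', ginv_class a -> ginv_class a' -> qeq a a' ->
          obstruction_map a z -> obstruction_map a' z' -> cohom2 mu_n z z') /\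
      (forall a a' z z', obstruction_map a z -> obstruction_map a' z' ->
          obstruction_map (a * a') (fun g h => z g h * z' g h)) /\
  (* exactness at nPic *)
      (forall c a, npic c -> kummer_map c a ->
          (qeq 1 a <-> exists c0, cocycle1 mu_n c0 /\ cohom1 unitsK c0 c)) /\
  (* exactness at (K^x/K^xn)^G/k^x *)
      (forall a z, ginv_class a -> obstruction_map a z ->
          (cobound2 mu_n z <->
           exists c a', [/\ npic c, kummer_map c a' & qeq a' a])).

End Cohomology.

(* Invertible objects of Sm_K(G): one-dimensional K-spaces with a smooth    *)
(* semilinear G-action (= smooth left K<G>-modules).                        *)
Section Modules.
Variables (G : permGroup) (K : GField G).
Local Notation act := (gf_act K).

Definition smooth_module (V : lmodType K) (actV : G -> V -> V) :=
  [/\ (forall g u v, actV g (u + v) = actV g u + actV g v),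
      (forall g (x : K) v, actV g (x *: v) = act g x *: actV g v),
      (forall v, actV pg_one v = v),
      (forall g h v, actV (pg_mul g h) v = actV g (actV h v)) &
      (forall v, pg_open (fun g => actV g v = v))].

Definition one_dimensional (V : lmodType K) :=
  exists v : V, v != 0 /\ forall w : V, exists x : K, w = x *: v.

Definition invertible_object (V : lmodType K) (actV : G -> V -> V) :=
  smooth_module actV /\ one_dimensional V.

(* The class of V in Pic_K(G) = H^1_cont(G,K^x) is the cocycle c given by
   g v = c(g) v for a basis v; V has order n in Pic_K(G). *)
Definition pic_order (V : lmodType K) (actV : G -> V -> V) (n : nat) :=
  exists (v : V) (c : G -> K),
    [/\ v != 0, (forall w : V, exists x : K, w = x *: v),
        (forall g, actV g v = c g *: v),
        (0 < n)%N /\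
        cobound1 (@unitsK G K) (fun g => c g ^+ n) &
        forall m, (0 < m < n)%N -> ~ cobound1 (@unitsK G K) (fun g => c g ^+ m)].

Definition contained_in_kummer_ext (n : nat) (a : K)
    (V : lmodType K) (actV : G -> V -> V) :=
  exists (F : GField G) (iota : {rmorphism K -> F}) (alpha : F),
    [/\ smoothGF F,
        (forall g (x : K), gf_act F g (iota x) = iota (act g x)),
        alpha ^+ n = iota a,
        (forall y : F, exists p : {poly K}, y = (map_poly iota p).[alpha]) &
        exists phi : V -> F,
          [/\ (forall u v, phi (u + v) = phi u + phi v),
              (forall (x : K) v, phi (x *: v) = iota x * phi v),
              injective phi &
              forall g v, phi (actV g v) = gf_act F g (phi v)]].

End Modules.

(* Write delta0 b for the
   1-cochain g |-> g(b)/b and delta1 e for the 2-cochain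
   (g, h) |-> e(g) g(e(h)) / e(gh).  A cocycle c with c^n = delta0 b is sent to
   the class of b, and an invariant class [a] is sent to delta1 e, where e(g) is
   an n-th root of g(a)/a.  Both coboundary maps are multiplicative, delta1
   kills delta0 b and every 1-cocycle, and the class of a in (K^x/K^xn)^G / k^x
   is determined by delta0 a up to n-th powers of coboundaries; exactness at
   each place is bookkeeping with these identities.

   For the second statement let v be a basis of L, with g v = c(g) v and
   c^n = delta0 b.  Let G act semilinearly on K[X] with X |-> c(g) X.  Then
   X^n - b is an eigenvector, so G permutes the finitely many irreducible
   factors of X^n - b up to scalars, and the stabilizer of one monic factor q is
   an open subgroup of finite index, hence all of G.  So G acts on the field
   K[X]/(q) = K(b^(1/n)), and v |-> X mod q embeds L into it. *)

From HB Require Import structures.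
From mathcomp Require Import all_boot all_algebra qfpoly.
From mathcomp Require Import ring zify.
From Stdlib Require Import Classical ClassicalEpsilon.
From Stdlib Require Import FunctionalExtensionality PropExtensionality.
Import GRing.Theory.
Local Open Scope ring_scope.
Set Implicit Arguments. Unset Strict Implicit.

Fact gf_act_is_zmod_morphism (G : permGroup) (K : GField G) (g : G) :
  zmod_morphism (gf_act K g).
Proof.
have act0 : gf_act K g 0 = 0.
  by apply: (addrI (gf_act K g 0)); rewrite -gf_actD !addr0.
move=> x y; rewrite gf_actD; congr (_ + _).
by apply: (addrI (gf_act K g y)); rewrite -gf_actD !subrr.
Qed.
HB.instance Definition _ (G : permGroup) (K : GField G) (g : G) :=
  GRing.isZmodMorphism.Build K K (gf_act K g) (@gf_act_is_zmod_morphism G K g).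

Fact gf_act_is_monoid_morphism (G : permGroup) (K : GField G) (g : G) :
  monoid_morphism (gf_act K g).
Proof. by split; [exact: gf_act1r | exact: gf_actM]. Qed.
HB.instance Definition _ (G : permGroup) (K : GField G) (g : G) :=
  GRing.isMonoidMorphism.Build K K (gf_act K g)
    (@gf_act_is_monoid_morphism G K g).

Section PermGroupTopology.
Variable G : permGroup.
Local Notation mul := (@pg_mul G).
Local Notation inv := (@pg_inv G).

Lemma pg_mulgV (x : G) : mul x (inv x) = pg_one.
Proof.
set y := mul x (inv x).
have yy : mul y y = y by rewrite /y -pg_mulA (pg_mulA (inv x)) pg_mulV pg_mul1.
transitivity (mul (inv y) (mul y y)); first by rewrite pg_mulA pg_mulV pg_mul1.
by rewrite yy pg_mulV.
Qed.

Lemma pg_mulKV (x y : G) : mul x (mul (inv x) y) = y.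
Proof. by rewrite pg_mulA pg_mulgV pg_mul1. Qed.

Definition nbhd (P : G -> Prop) (g : G) :=
  exists U, [/\ pg_open U, U g & forall u, U u -> P u].

Lemma nbhd_and P Q g : nbhd P g -> nbhd Q g -> nbhd (fun u => P u /\ Q u) g.
Proof.
move=> [U [oU Ug PU]] [V [oV Vg QV]].
exists (fun x => U x /\ V x); split=> //; first exact: pg_open_inter.
by move=> u [/PU ? /QV ?].
Qed.

Lemma open_of_nbhd (P : G -> Prop) : (forall g, P g -> nbhd P g) -> pg_open P.
Proof.
move=> nbhdP.
pose I := {U : G -> Prop | pg_open U /\ forall u, U u -> P u}.
have -> : P = (fun x => exists i : I, sval i x).
  apply: functional_extensionality => x; apply: propositional_extensionality.
  split=> [/nbhdP [U [oU Ux PU]] | [[U [_ PU]] /= /PU] //].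
  by exists (exist _ U (conj oU PU)).
by apply: pg_open_union => -[U []].
Qed.

Lemma loc_const1_cst T (t : T) : loc_const1 (fun _ : G => t).
Proof. by move=> g; exists (fun _ => True); split => //; exact: pg_open_setT. Qed.

Lemma loc_const1_map T1 T2 (F : T1 -> T2) f :
  loc_const1 f -> loc_const1 (fun g : G => F (f g)).
Proof.
by move=> lcf g; have [U [oU Ug fU]] := lcf g; exists U; split => // u /fU ->.
Qed.

Lemma loc_const1_op2 T1 T2 T3 (op : T1 -> T2 -> T3) f1 f2 :
  loc_const1 f1 -> loc_const1 f2 -> loc_const1 (fun g : G => op (f1 g) (f2 g)).
Proof.
move=> lc1 lc2 g; have [U [oU Ug fU]] := nbhd_and (lc1 g) (lc2 g).
by exists U; split => // u /fU [-> ->].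
Qed.

Lemma loc_const_orbit T (A : G -> T -> T) (t : T) :
  (forall x, A pg_one x = x) -> (forall g h x, A (mul g h) x = A g (A h x)) ->
  pg_open (fun g => A g t = t) -> loc_const1 (fun g => A g t).
Proof.
move=> A1 AM open_stab h.
have [|U [V [_ oV Uh Vh UV]]] := pg_mul_cont open_stab (x := inv h) (y := h).
  by rewrite pg_mulV A1.
exists V; split => // v /(UV _ _ Uh) fix_t.
by rewrite -(pg_mulKV h v) AM fix_t.
Qed.

Lemma loc_const2_op2 T1 T2 T3 (op : T1 -> T2 -> T3) f1 f2 :
  loc_const2 f1 -> loc_const2 f2 ->
  loc_const2 (fun g h : G => op (f1 g h) (f2 g h)).
Proof.
move=> lc1 lc2 g h.
have [U1 [V1 [oU1 oV1 U1g V1h E1]]] := lc1 g h.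
have [U2 [V2 [oU2 oV2 U2g V2h E2]]] := lc2 g h.
exists (fun x => U1 x /\ U2 x), (fun x => V1 x /\ V2 x).
split=> //; try exact: pg_open_inter.
by move=> u v [? ?] [? ?]; rewrite E1 ?E2.
Qed.

Lemma loc_const2_mul T (f : G -> T) :
  loc_const1 f -> loc_const2 (fun g h => f (mul g h)).
Proof.
move=> lcf g h; have [W [oW Wgh fW]] := lcf (mul g h).
have [U [V [oU oV Ug Vh UV]]] := pg_mul_cont oW Wgh.
by exists U, V; split => // u v Uu Vv; rewrite fW //; apply: UV.
Qed.

End PermGroupTopology.

Section Cochains.
Variables (G : permGroup) (K : GField G).
Hypothesis smK : smoothGF K.
Local Notation act := (gf_act K).
Local Notation mul := (@pg_mul G).

Lemma act_loc_const (x : K) : loc_const1 (fun g => act g x).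
Proof.
by apply: loc_const_orbit; [exact: gf_act1 | exact: gf_actMg | exact: smK].
Qed.

Definition is_cocycle (c : G -> K) := forall g h, c (mul g h) = c g * act g (c h).

Definition delta0 (d : K) (g : G) : K := act g d / d.

Definition delta1 (e : G -> K) (g h : G) : K :=
  e g * act g (e h) / e (mul g h).

Lemma delta01 g : delta0 1 g = 1.
Proof. by rewrite /delta0 rmorph1 divr1. Qed.

Lemma delta0M x y g : delta0 (x * y) g = delta0 x g * delta0 y g.
Proof. by rewrite /delta0 rmorphM invfM mulrACA. Qed.

Lemma delta0V x g : delta0 x^-1 g = (delta0 x g)^-1.
Proof. by rewrite /delta0 fmorphV invfM invrK. Qed.

Lemma delta0X x m g : delta0 (x ^+ m) g = delta0 x g ^+ m.
Proof. by rewrite /delta0 rmorphXn exprMn exprVn. Qed.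

Lemma delta0_neq0 d : d != 0 -> forall g, delta0 d g != 0.
Proof. by move=> d0 g; rewrite mulf_neq0 ?invr_eq0 ?fmorph_eq0. Qed.

Lemma delta0_fixed t g : t != 0 -> act g t = t -> delta0 t g = 1.
Proof. by move=> t0 fix_t; rewrite /delta0 fix_t divff. Qed.

Lemma delta0_eq1 t g : delta0 t g = 1 -> act g t = t.
Proof. exact: divr1_eq. Qed.

Lemma delta0_loc_const d : loc_const1 (delta0 d).
Proof. exact: (loc_const1_map (fun x => x / d) (act_loc_const d)). Qed.

Lemma delta0_cocycle d : d != 0 -> is_cocycle (delta0 d).
Proof.
move=> d0 g h; rewrite /delta0 fmorph_div gf_actMg [RHS]mulrC mulrA divfK //.
by rewrite fmorph_eq0.
Qed.

Lemma delta1M e f g h :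
  delta1 (fun x => e x * f x) g h = delta1 e g h * delta1 f g h.
Proof. by rewrite /delta1 rmorphM invfM; ring. Qed.

Lemma delta1V e g h : delta1 (fun x => (e x)^-1) g h = (delta1 e g h)^-1.
Proof. by rewrite /delta1 fmorphV !invfM invrK. Qed.

Lemma delta1X e m g h : delta1 (fun x => e x ^+ m) g h = delta1 e g h ^+ m.
Proof. by rewrite /delta1 rmorphXn -exprVn -!exprMn. Qed.

Lemma delta1_neq0 e g h : (forall x, e x != 0) -> delta1 e g h != 0.
Proof. by move=> e0; rewrite !mulf_neq0 ?invr_eq0 ?fmorph_eq0. Qed.

Lemma is_cocycleE c : (forall g, c g != 0) ->
  is_cocycle c <-> forall g h, delta1 c g h = 1.
Proof.
move=> c0; split=> [cc g h | dc1 g h]; last exact/esym/divr1_eq/dc1.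
by rewrite /delta1 -cc divff.
Qed.

Lemma delta1_delta0 d g h : d != 0 -> delta1 (delta0 d) g h = 1.
Proof.
move=> d0; have /is_cocycleE dc1 := delta0_neq0 d0.
by apply: (iffLR dc1); exact: delta0_cocycle.
Qed.

Lemma delta1_loc_const e : loc_const1 e -> loc_const2 (delta1 e).
Proof.
move=> lce.
apply: (loc_const2_op2 (fun x y => x / y)); last exact: loc_const2_mul.
apply: (loc_const2_op2 *%R) => g h.
  have [U [oU Ug eU]] := lce g.
  exists U, (fun _ => True); split => //; first exact: pg_open_setT.
  by move=> u v /eU.
have [V [oV Vh eV]] := lce h; have [U [oU Ug aU]] := act_loc_const (e h) g.
by exists U, V; split => // u v Uu Vv; rewrite eV // aU.
Qed.

Lemma delta1_2cocycle e g h l : (forall x, e x != 0) ->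
  act g (delta1 e h l) * delta1 e g (mul h l)
  = delta1 e (mul g h) l * delta1 e g h.
Proof.
move=> e0; rewrite /delta1 !fmorph_div !rmorphM /= -gf_actMg pg_mulA.
by field; rewrite fmorph_eq0 !e0.
Qed.

Lemma ratio_loc_const e e' d : loc_const1 e -> loc_const1 e' ->
  loc_const1 (fun x => e' x / (e x * delta0 d x)).
Proof.
move=> lce lce'; apply: (loc_const1_op2 (fun x y => x / y)) => //.
by apply: (loc_const1_op2 *%R) => //; exact: delta0_loc_const.
Qed.

Lemma delta1_ratio e e' d g h : d != 0 ->
  delta1 (fun x => e' x / (e x * delta0 d x)) g h
  = delta1 e' g h / delta1 e g h.
Proof. by move=> d0; rewrite delta1M delta1V delta1M delta1_delta0 // mulr1. Qed.

End Cochains.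

Section KummerSequence.
Variables (G : permGroup) (K : GField G) (n : nat).
Hypotheses (smK : smoothGF K) (n_gt0 : (0 < n)%N).
Local Notation act := (gf_act K).
Local Notation mu := (@mu_n G K n).
Local Notation units := (@unitsK G K).
Local Notation delta0 := (@delta0 G K).
Local Notation delta1 := (@delta1 G K).

Lemma mu_n_neq0 (x : K) : mu x -> x != 0.
Proof.
move=> xn1; apply/eqP => x0; move: xn1.
by rewrite /mu_n x0 expr0n gtn_eqF // => /esym/eqP; rewrite oner_eq0.
Qed.

Lemma delta0_of_qeq (a a' : K) : a != 0 -> qeq n a a' ->
  exists2 d, d != 0 & forall g, delta0 a' g = delta0 a g * delta0 d g ^+ n.
Proof.
move=> a0 [t [d [t0 fix_t d0 ->]]]; exists d => // g.
by rewrite !delta0M (delta0_fixed t0) // mulr1 delta0X.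
Qed.

Lemma qeq_of_delta0 (a a' d : K) : a != 0 -> a' != 0 -> d != 0 ->
  (forall g, delta0 a' g = delta0 a g * delta0 d g ^+ n) -> qeq n a a'.
Proof.
move=> a0 a'0 d0 Ea'; exists (a' / (a * d ^+ n)), d; split => //.
- by rewrite mulf_neq0 ?invr_eq0 ?mulf_neq0 ?expf_neq0.
- move=> g; apply: delta0_eq1.
  rewrite delta0M delta0V delta0M delta0X Ea' divff //.
  by rewrite mulf_neq0 ?expf_neq0 ?delta0_neq0.
- by field; rewrite a0 expf_neq0.
Qed.

Lemma delta1_mu_n (e : G -> K) (a : K) :
  a != 0 -> (forall g, e g ^+ n = delta0 a g) -> forall g h, mu (delta1 e g h).
Proof.
by move=> a0 en g h; rewrite /mu_n -delta1X /delta1 !en; exact: delta1_delta0.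
Qed.

Lemma kummer_ratio_mu_n (e e' : G -> K) (a a' d : K) :
  d != 0 -> (forall g, e g != 0) ->
  (forall g, e g ^+ n = delta0 a g) -> (forall g, e' g ^+ n = delta0 a' g) ->
  (forall g, delta0 a' g = delta0 a g * delta0 d g ^+ n) ->
  forall g, mu (e' g / (e g * delta0 d g)).
Proof.
move=> d0 e0 en e'n Ea' g; rewrite /mu_n expr_div_n exprMn en e'n Ea' divff //.
by rewrite -en mulf_neq0 ?expf_neq0 ?delta0_neq0.
Qed.

Lemma npic_of_mu_cocycle (c : G -> K) : cocycle1 mu c -> npic n c.
Proof.
move=> [lcc mu_c cc]; split; first by split => // g; exact: mu_n_neq0.
exists 1; split=> [|g]; first exact: oner_neq0.
by rewrite mu_c rmorph1 divr1 mulr1.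
Qed.

Lemma cohom1_units_of_mu (c c' : G -> K) : cohom1 mu c c' -> cohom1 units c c'.
Proof. by move=> [b [mu_b Ec']]; exists b; split => //; exact: mu_n_neq0. Qed.

Lemma kummer_map_exists (c : G -> K) : npic n c -> exists a, kummer_map n c a.
Proof.
by move=> [_ [b [b0 Ecn]]]; exists b; split => // g; rewrite Ecn mul1r.
Qed.

Lemma ginv_class_of_kummer_map (c : G -> K) (a : K) :
  npic n c -> kummer_map n c a -> ginv_class n a.
Proof.
move=> [[_ c0 _] _] [a0 Ecn]; split => // g; exists (c g); split; first exact: c0.
by rewrite Ecn mulrC divfK.
Qed.

Lemma kummer_map_qeq (c c' : G -> K) (a a' : K) :
  cohom1 units c c' -> kummer_map n c a -> kummer_map n c' a' -> qeq n a a'.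
Proof.
move=> [b [b0 Ec']] [a0 Ecn] [a'0 Ec'n]; apply: (qeq_of_delta0 a0 a'0 b0) => g.
by rewrite /delta0 -Ec'n Ec' exprMn Ecn.
Qed.

Lemma kummer_mapM (c c' : G -> K) (a a' : K) :
  kummer_map n c a -> kummer_map n c' a' ->
  kummer_map n (fun g => c g * c' g) (a * a').
Proof.
move=> [a0 Ecn] [a'0 Ec'n]; split=> [|g]; first exact: mulf_neq0.
by rewrite exprMn Ecn Ec'n; exact: esym (delta0M _ _ _).
Qed.

Lemma obstruction_map_neq0 (a : K) (z : G -> G -> K) :
  obstruction_map n a z -> a != 0.
Proof.
move=> [e [_ e0 en _]]; apply/eqP => a0.
by have := expf_neq0 n (e0 pg_one); rewrite en a0 invr0 mulr0 eqxx.
Qed.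

Lemma obstruction_exists (a : K) : ginv_class n a ->
  exists z, obstruction_map n a z /\ cocycle2 mu z.
Proof.
move=> [a0 a_inv].
(* Choosing the root as a function of g(a) alone makes e locally constant. *)
pose is_root x (d : K) := d != 0 /\ x = a * d ^+ n.
pose root x := epsilon (inhabits 0) (is_root x).
pose e g := root (act g a).
have eP g : e g != 0 /\ act g a = a * e g ^+ n.
  exact: (epsilon_spec (inhabits 0) (is_root (act g a)) (a_inv g)).
have en g : e g ^+ n = delta0 a g by rewrite /delta0 (eP g).2 mulrC mulKf.
have lce : loc_const1 e := loc_const1_map root (act_loc_const smK a).
exists (delta1 e); split; first by exists e; split => // g; exact: (eP g).1.
split; [exact: delta1_loc_const | exact: delta1_mu_n en | ].
by move=> g h l; apply: delta1_2cocycle => x; exact: (eP x).1.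
Qed.

Lemma obstruction_cohom2 (a a' : K) (z z' : G -> G -> K) : qeq n a a' ->
  obstruction_map n a z -> obstruction_map n a' z' -> cohom2 mu z z'.
Proof.
move=> qaa' oz [e' [lce' e'0 e'n Ez']]; have a0 := obstruction_map_neq0 oz.
have [e [lce e0 en Ez]] := oz; have [d d0 Ea'] := delta0_of_qeq a0 qaa'.
pose f g := e' g / (e g * delta0 d g); exists f; split.
- exact: ratio_loc_const.
- exact: kummer_ratio_mu_n d0 e0 en e'n Ea'.
- move=> g h; rewrite Ez Ez' -/(delta1 f g h) delta1_ratio //.
  by rewrite [RHS]mulrC divfK // delta1_neq0.
Qed.

Lemma obstruction_mapM (a a' : K) (z z' : G -> G -> K) :
  obstruction_map n a z -> obstruction_map n a' z' ->
  obstruction_map n (a * a') (fun g h => z g h * z' g h).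
Proof.
move=> [e [lce e0 en Ez]] [e' [lce' e'0 e'n Ez']].
exists (fun g => e g * e' g); split.
- exact: loc_const1_op2.
- by move=> g; rewrite mulf_neq0.
- by move=> g; rewrite exprMn en e'n; exact: esym (delta0M _ _ _).
- by move=> g h; rewrite Ez Ez' -delta1M.
Qed.

Lemma exact_at_npic (c : G -> K) (a : K) : npic n c -> kummer_map n c a ->
  qeq n 1 a <-> exists c0, cocycle1 mu c0 /\ cohom1 units c0 c.
Proof.
move=> [[lcc c0 cc] _] [a0 Ecn]; split.
- move=> /(delta0_of_qeq (oner_neq0 K)) [d d0 Ea].
  exists (fun g => c g / delta0 d g); split; first split.
  + apply: (loc_const1_op2 (fun x y => x / y)) => //; exact: delta0_loc_const.
  + move=> g; rewrite /mu_n expr_div_n Ecn.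
    by rewrite -/(delta0 a g) Ea delta01 mul1r divff // expf_neq0 // delta0_neq0.
  + have c'0 g : c g / delta0 d g != 0.
      by rewrite mulf_neq0 ?invr_eq0 ?delta0_neq0 //; exact: c0.
    apply/(is_cocycleE c'0) => g h.
    rewrite delta1M delta1V delta1_delta0 // invr1 mulr1.
    by move: g h; apply/(is_cocycleE c0).
  + by exists d; split => // g; rewrite divfK // delta0_neq0.
- move=> [c' [[_ mu_c' _] [b [b0 Ec]]]].
  apply: (qeq_of_delta0 (oner_neq0 K) a0 b0) => g.
  by rewrite delta01 mul1r /delta0 -Ecn Ec exprMn mu_c' mul1r.
Qed.

Lemma exact_at_kummer (a : K) (z : G -> G -> K) : obstruction_map n a z ->
  cobound2 mu z <-> exists c a', [/\ npic n c, kummer_map n c a' & qeq n a' a].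
Proof.
move=> oz; have a0 := obstruction_map_neq0 oz; have [e [lce e0 en Ez]] := oz.
split.
- move=> [f [lcf mu_f Ef]]; have f0 g := mu_n_neq0 (mu_f g).
  have c0 g : e g / f g != 0 by rewrite mulf_neq0 ?invr_eq0.
  exists (fun g => e g / f g), a; split.
  + split; first split.
    * exact: (loc_const1_op2 (fun x y => x / y)).
    * exact: c0.
    * apply/(is_cocycleE c0) => g h; rewrite delta1M delta1V.
      by rewrite -[delta1 f g h]mul1r -Ef Ez divff // delta1_neq0.
    * by exists a; split => // g; rewrite mul1r expr_div_n en mu_f divr1.
  + by split => // g; rewrite expr_div_n en mu_f divr1.
  + apply: (qeq_of_delta0 a0 a0 (oner_neq0 K)) => g.
    by rewrite delta01 expr1n mulr1.
- move=> [c [a' [[[lcc c0 cc] _] [a'0 Ecn] qa'a]]].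
  have [d d0 Ea] := delta0_of_qeq a'0 qa'a.
  pose f g := e g / (c g * delta0 d g); exists f; split.
  + exact: ratio_loc_const.
  + exact: kummer_ratio_mu_n d0 c0 Ecn en Ea.
  + move=> g h; rewrite -/(delta1 f g h) delta1_ratio // Ez mul1r.
    by rewrite (iffLR (is_cocycleE c0) cc) divr1.
Qed.

Lemma kummer_sequence_exact : kummer_exact_sequence K n.
Proof.
split; first exact: npic_of_mu_cocycle.
split; first exact: cohom1_units_of_mu.
split; first exact: kummer_map_exists.
split; first exact: ginv_class_of_kummer_map.
split; first by move=> c c' a a' _ _; exact: kummer_map_qeq.
split; first exact: kummer_mapM.
split; first exact: obstruction_exists.
split; first by move=> a a' z z' _ _; exact: obstruction_cohom2.
split; first exact: obstruction_mapM.
split; first exact: exact_at_npic.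
by move=> a z _; exact: exact_at_kummer.
Qed.

End KummerSequence.

Section IrreducibleFactors.
Variable F : fieldType.

Lemma irreducible_dvdp_exists (p : {poly F}) :
  (1 < size p)%N -> exists2 q, irreducible_poly q & q %| p.
Proof.
have [m] := ubnP (size p); elim: m p => // m IH p /ltnSE le_pm sp.
have [irr_p | red_p] := classic (irreducible_poly p); first by exists p.
have [d [d1 dp not_dp]] :
    exists d : {poly F}, [/\ size d != 1%N, d %| p & ~~ (d %= p)].
  apply: NNPP => no_d; apply: red_p; split => // d d1 dp.
  by apply/negPn/negP => not_dp; apply: no_d; exists d.
have p0 : p != 0 by rewrite -size_poly_gt0 ltnW.
have d0 : d != 0 by apply: contraTneq dp => ->; rewrite dvd0p.
have ltdp : (size d < size p)%N.
  rewrite ltn_neqAle dvdp_leq // andbT.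
  by apply: contraNneq not_dp => /eqP; rewrite dvdp_size_eqp.
have [|q irr_q qd] := IH d (leq_trans ltdp le_pm).
  by move: d1 d0; rewrite -size_poly_gt0; case: (size d) => [|[|]].
by exists q => //; exact: dvdp_trans dp.
Qed.

Lemma monic_irreducible_dvdp_exists (p : {poly F}) :
  (1 < size p)%N -> exists2 q, monic_irreducible_poly q & q %| p.
Proof.
move=> sp; have [q [sq irr_q] qp] := irreducible_dvdp_exists sp.
have lq0 : (lead_coef q)^-1 != 0.
  by rewrite invr_eq0 lead_coef_eq0 -size_poly_gt0 ltnW.
exists ((lead_coef q)^-1 *: q); last by rewrite dvdpZl.
split; last by rewrite monicE lead_coefZ mulVf // -invr_eq0.
split=> [|d d1]; first by rewrite size_scale.
rewrite dvdpZr // => dq; apply: eqp_trans (irr_q d d1 dq) _.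
by rewrite eqp_sym eqp_scale.
Qed.

Lemma irreducible_divisors_finite (p : {poly F}) : p != 0 ->
  exists L : list {poly F}, forall q, irreducible_poly q -> q %| p ->
    exists f, List.In f L /\ q %= f.
Proof.
have [m] := ubnP (size p); elim: m p => // m IH p /ltnSE le_pm p0.
have [[q0 irr_q0 /dvdpP [r def_p]] | no_factor] :=
  classic (exists2 q0, irreducible_poly q0 & q0 %| p); last first.
  by exists nil => q irr_q qp; case: no_factor; exists q.
have q00 := irredp_neq0 irr_q0.
have r0 : r != 0 by apply: contraNneq p0; rewrite def_p => ->; rewrite mul0r.
have ltrp : (size r < size p)%N.
  have := irr_q0.1; rewrite def_p size_mul //; move: (size r) (size q0); lia.
have [L HL] := IH r (leq_trans ltrp le_pm) r0.
exists (q0 :: L) => q irr_q; case: (boolP (q %| q0)) => [qq0 _ | not_qq0].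
  exists q0; split; first by left.
  by apply: irr_q0.2 => //; rewrite neq_ltn irr_q.1 orbT.
rewrite def_p mulrC Gauss_dvdpr ?irreducible_poly_coprime // => qr.
by have [f [Lf qf]] := HL q irr_q qr; exists f; split => //; right.
Qed.

End IrreducibleFactors.

Section TwistedAction.
Variables (G : permGroup) (K : GField G) (c : G -> K).
Hypotheses (c0 : forall g, c g != 0) (c_cocycle : is_cocycle c).
Local Notation act := (gf_act K).
Local Notation mul := (@pg_mul G).
Local Notation inv := (@pg_inv G).

Lemma cocycle_one : c pg_one = 1.
Proof.
have E := c_cocycle pg_one pg_one; rewrite pg_mul1 gf_act1 in E.
by apply: (mulIf (c0 pg_one)); rewrite mul1r -E.
Qed.

(* The semilinear action of [g] on [K[X]] under which [X] transforms like the
   basis vector of the line with cocycle [c]. *)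
Definition twist g : {poly K} -> {poly K} :=
  comp_poly (c g *: 'X) \o map_poly (act g).
HB.instance Definition _ g := GRing.RMorphism.on (twist g).

Lemma twistC g x : twist g x%:P = (act g x)%:P.
Proof. by rewrite /twist /= map_polyC comp_polyC. Qed.

Lemma twistX g : twist g 'X = c g *: 'X.
Proof. by rewrite /twist /= map_polyX comp_polyX. Qed.

Lemma twistXn g m : twist g 'X^m = c g ^+ m *: 'X^m.
Proof. by rewrite rmorphXn /= twistX exprZn. Qed.

Lemma twist_mul g h p : twist (mul g h) p = twist g (twist h p).
Proof.
rewrite /twist /= (map_comp_poly (act g)) map_polyZ map_polyX -comp_polyA.
rewrite comp_polyZ comp_polyX scalerA c_cocycle mulrC -map_poly_comp.
by congr (_ \Po _); apply: eq_map_poly => x /=; rewrite gf_actMg.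
Qed.

Lemma twist1 p : twist pg_one p = p.
Proof.
rewrite /twist /= cocycle_one scale1r comp_polyXr map_poly_id // => x _.
exact: gf_act1.
Qed.

Lemma twistK g : cancel (twist g) (twist (inv g)).
Proof. by move=> p; rewrite -twist_mul pg_mulV twist1. Qed.

Lemma twistKV g : cancel (twist (inv g)) (twist g).
Proof. by move=> p; rewrite -twist_mul pg_mulgV twist1. Qed.

Lemma size_twist g p : size (twist g p) = size p.
Proof.
rewrite /twist /= size_comp_poly2 ?size_map_poly //.
by rewrite size_scale // size_polyX.
Qed.

Lemma twist_dvdpE g p q : (twist g p %| twist g q) = (p %| q).
Proof.
have twist_dvdp h r s : r %| s -> twist h r %| twist h s.
  by move=> /dvdpP [t ->]; rewrite rmorphM dvdp_mull.
apply/idP/idP; last exact: twist_dvdp.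
by move=> /(twist_dvdp (inv g)); rewrite !twistK.
Qed.

Lemma twist_eqp g p q : (twist g p %= twist g q) = (p %= q).
Proof. by rewrite /eqp !twist_dvdpE. Qed.

Lemma twist_irreducible g q : irreducible_poly q -> irreducible_poly (twist g q).
Proof.
move=> [sq irr_q]; split; first by rewrite size_twist.
move=> d d1; rewrite -(twistKV g d) twist_dvdpE twist_eqp; apply: irr_q.
by rewrite size_twist.
Qed.

Lemma twist_loc_const : smoothGF K -> loc_const1 c ->
  forall p, loc_const1 (fun g => twist g p).
Proof.
move=> smK lcc p.
have lc_map (s : seq K) : loc_const1 (fun g => map (act g) s).
  elim: s => [|x s IH]; first exact: loc_const1_cst.
  exact: (loc_const1_op2 cons (act_loc_const smK x) IH).
have lc := loc_const1_op2 (fun s (x : K) => Poly s \Po (x *: 'X)) (lc_map p) lcc.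
move=> g; have [U [oU Ug E]] := lc g; exists U; split => // u /E.
by rewrite /twist /= !map_polyE.
Qed.

Definition twist_stabilizer (q : {poly K}) (g : G) : Prop := q %| twist g q.

Lemma twist_stabilizer_subgroup q : is_subgroup (twist_stabilizer q).
Proof.
split; first by rewrite /twist_stabilizer twist1 dvdpp.
  move=> a b qa qb; rewrite /twist_stabilizer twist_mul.
  by apply: dvdp_trans qa _; rewrite twist_dvdpE.
move=> a qa; have eq_q : q %= twist a q by rewrite -dvdp_size_eqp // size_twist.
by rewrite /twist_stabilizer -(twist_dvdpE a) twistKV -(eqp_dvdl _ eq_q).
Qed.

Lemma twist_stabilizer_open : smoothGF K -> loc_const1 c ->
  forall q, pg_open (twist_stabilizer q).
Proof.
move=> smK lcc q; apply: open_of_nbhd => h qh.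
have [U [oU Uh E]] := twist_loc_const smK lcc q h.
by exists U; split => // u /E; rewrite /twist_stabilizer => ->.
Qed.

Lemma twist_stabilizer_finite_index (P q : {poly K}) :
  P != 0 -> (forall g, exists2 k, k != 0 & twist g P = k *: P) ->
  irreducible_poly q -> q %| P -> finite_index (twist_stabilizer q).
Proof.
move=> P0 twistP irr_q qP; have [L HL] := irreducible_divisors_finite P0.
pose rep f := epsilon (inhabits pg_one) (fun r => twist r q %= f).
exists (map rep L) => g.
have [|f [Lf gq_f]] := HL (twist g q) (twist_irreducible g irr_q).
  have [k k0 twistPE] := twistP g.
  by rewrite -(dvdpZr _ _ k0) -twistPE twist_dvdpE.
have rep_f : twist (rep f) q %= f.
  by apply: (epsilon_spec (inhabits pg_one) (fun r => twist r q %= f)); exists g.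
have gq_rep : twist g q %= twist (rep f) q by rewrite (eqp_trans gq_f) // eqp_sym.
exists (rep f); split; first exact: List.in_map.
rewrite /twist_stabilizer twist_mul -(twist_dvdpE (rep f)) twistKV.
by rewrite (eqp_dvdr _ gq_rep) dvdpp.
Qed.

End TwistedAction.

Section KummerField.
Variables (G : permGroup) (K : GField G) (c : G -> K).
Hypotheses (c0 : forall g, c g != 0) (c_cocycle : is_cocycle c).
Variables (q : {poly K}) (qI : monic_irreducible_poly q).
Hypothesis q_stable : forall g, q %| twist c g q.
Local Notation act := (gf_act K).
Local Notation twist := (twist c).

Definition kummer_field : fieldType := {poly %/ q with qI}.

Definition kummer_root : kummer_field := in_qpoly q 'X.

Lemma in_qpoly_val (y : kummer_field) : in_qpoly q (y : {poly K}) = y.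
Proof. by apply: val_inj; apply: in_qpoly_small; exact: size_mk_monic. Qed.

Lemma in_qpoly_dvdp p : q %| p -> in_qpoly q p = 0.
Proof.
have mkq : mk_monic q = q by exact: mk_monicE.
move=> /dvdpP [r ->]; apply: val_inj => /=.
by rewrite mkq Pdiv.RingMonic.rmodp_mull // qI.2.
Qed.

Definition kummer_act g (y : kummer_field) : kummer_field :=
  in_qpoly q (twist g (y : {poly K})).

Lemma kummer_act_in_qpoly g p :
  kummer_act g (in_qpoly q p) = in_qpoly q (twist g p).
Proof.
have mkq : mk_monic q = q by exact: mk_monicE.
rewrite /kummer_act /= mkq [in RHS](Pdiv.RingMonic.rdivp_eq qI.2 p).
by rewrite !rmorphD !rmorphM /= (in_qpoly_dvdp (q_stable g)) mulr0 add0r.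
Qed.

Lemma kummer_actD g (y z : kummer_field) :
  kummer_act g (y + z) = kummer_act g y + kummer_act g z.
Proof. by rewrite /kummer_act !rmorphD. Qed.

Lemma kummer_actM g (y z : kummer_field) :
  kummer_act g (y * z) = kummer_act g y * kummer_act g z.
Proof.
rewrite -[y]in_qpoly_val -[z]in_qpoly_val -rmorphM /=.
by rewrite !kummer_act_in_qpoly !rmorphM.
Qed.

Lemma kummer_act1r g : kummer_act g 1 = 1.
Proof. by rewrite -(in_qpoly1 q) kummer_act_in_qpoly rmorph1 in_qpoly1. Qed.

Lemma kummer_act1 (y : kummer_field) : kummer_act pg_one y = y.
Proof. by rewrite /kummer_act twist1 // in_qpoly_val. Qed.

Lemma kummer_actMg g h (y : kummer_field) :
  kummer_act (pg_mul g h) y = kummer_act g (kummer_act h y).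
Proof.
by rewrite [kummer_act h y]/kummer_act kummer_act_in_qpoly /kummer_act twist_mul.
Qed.

Definition kummer_gfield : GField G :=
  GFieldPack kummer_actD kummer_actM kummer_act1r kummer_act1 kummer_actMg.

Lemma kummer_gfield_smooth : smoothGF K -> loc_const1 c -> smoothGF kummer_gfield.
Proof.
move=> smK lcc y; apply: open_of_nbhd => h /= fix_y.
have [U [oU Uh E]] := twist_loc_const smK lcc (y : {poly K}) h.
by exists U; split => // u /E Eu; rewrite /kummer_act Eu.
Qed.

Lemma in_alg_kummer_field (x : K) : x%:A = in_qpoly q x%:P :> kummer_field.
Proof. by rewrite -alg_polyC linearZ /= in_qpoly1. Qed.

Lemma kummer_gfield_in_alg g (x : K) :
  gf_act kummer_gfield g (in_alg kummer_field x) = in_alg kummer_field (act g x).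
Proof. by rewrite /= !in_alg_kummer_field kummer_act_in_qpoly twistC. Qed.

Lemma kummer_root_act g :
  gf_act kummer_gfield g kummer_root = in_alg kummer_field (c g) * kummer_root.
Proof.
by rewrite /= kummer_act_in_qpoly twistX in_alg_kummer_field -rmorphM mul_polyC.
Qed.

Lemma kummer_field_generated (y : kummer_field) :
  exists p : {poly K}, y = (map_poly (in_alg kummer_field) p).[kummer_root].
Proof.
exists (y : {poly K}).
transitivity (in_qpoly q ((y : {poly K}) \Po 'X)).
  by rewrite comp_polyXr in_qpoly_val.
rewrite in_qpoly_comp_horner; congr (_.[_]); apply: eq_map_poly => x.
by apply: val_inj; rewrite /= -alg_polyC.
Qed.

Lemma kummer_rootX m (b : K) : q %| 'X^m - b%:P -> kummer_root ^+ m = b%:A.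
Proof.
move=> /in_qpoly_dvdp /eqP; rewrite rmorphB subr_eq0 => /eqP E.
by rewrite in_alg_kummer_field -E rmorphXn.
Qed.

End KummerField.

Lemma scalerIl (F : fieldType) (V : lmodType F) (v : V) :
  v != 0 -> injective ( *:%R^~ v : F -> V).
Proof.
move=> v0 x y /eqP; rewrite -subr_eq0 -scalerBl scaler_eq0 (negPf v0) orbF.
by rewrite subr_eq0 => /eqP.
Qed.

Section InvertibleObject.
Variables (G : permGroup) (K : GField G) (V : lmodType K) (actV : G -> V -> V).
Hypothesis smV : smooth_module actV.
Variables (v : V) (c : G -> K).
Hypotheses (v0 : v != 0) (actV_v : forall g, actV g v = c g *: v).

Lemma smooth_module_cocycle :
  [/\ forall g, c g != 0, is_cocycle c & loc_const1 c].
Proof.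
have [addV semV actV1 actVM open_stab] := smV.
have actV0 g : actV g 0 = 0 by apply: (addrI (actV g 0)); rewrite -addV !addr0.
split.
- move=> g; apply: contra_neq v0 => cg0.
  by rewrite -(actV1 v) -(pg_mulV g) actVM actV_v cg0 scale0r actV0.
- move=> g h; apply: (scalerIl v0).
  by rewrite /= -actV_v actVM actV_v semV actV_v scalerA mulrC.
- move=> g; have [U [oU Ug E]] := loc_const_orbit actV1 actVM (open_stab v) g.
  by exists U; split => // u /E; rewrite !actV_v => /(scalerIl v0).
Qed.

Hypothesis v_span : forall w : V, exists x : K, w = x *: v.

Lemma line_embedding (F : GField G) (iota : {rmorphism K -> F}) (alpha : F) :
  alpha != 0 -> (forall g x, gf_act F g (iota x) = iota (gf_act K g x)) ->
  (forall g, gf_act F g alpha = iota (c g) * alpha) ->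
  exists phi : V -> F,
    [/\ (forall u w, phi (u + w) = phi u + phi w),
        (forall (x : K) w, phi (x *: w) = iota x * phi w),
        injective phi &
        forall g w, phi (actV g w) = gf_act F g (phi w)].
Proof.
move=> alpha0 iotaE alphaE; have [addV semV _ _ _] := smV.
have coord_ex w : exists x, w == x *: v by have [x ->] := v_span w; exists x.
pose coord w := xchoose (coord_ex w).
have coordK w : w = coord w *: v by exact/eqP/(xchooseP (coord_ex w)).
have coordE w x : w = x *: v -> coord w = x.
  by move=> Ew; apply: (scalerIl v0); rewrite -coordK.
exists (fun w => iota (coord w) * alpha); split.
- move=> u w; rewrite (coordE (u + w) (coord u + coord w)) ?rmorphD ?mulrDl //.
  by rewrite scalerDl -!coordK.
- move=> x w; rewrite (coordE (x *: w) (x * coord w)) ?rmorphM ?mulrA //.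
  by rewrite -scalerA -coordK.
- move=> u w /(mulIf alpha0) /fmorph_inj Euw.
  by rewrite (coordK u) (coordK w) Euw.
- move=> g w; rewrite (coordE (actV g w) (gf_act K g (coord w) * c g)).
    by rewrite gf_actM iotaE alphaE rmorphM mulrA.
  by rewrite {1}(coordK w) semV actV_v scalerA.
Qed.

End InvertibleObject.

Section KummerExtension.
Variables (G : permGroup) (K : GField G) (n : nat) (c : G -> K) (b : K).
Hypotheses (smK : smoothGF K) (n_gt0 : (0 < n)%N).
Hypothesis noF : no_proper_open_finite_index G.
Hypotheses (c0 : forall g, c g != 0) (c_cocycle : is_cocycle c).
Hypothesis lcc : loc_const1 c.
Hypotheses (b0 : b != 0) (cn : forall g, c g ^+ n = delta0 b g).
Local Notation act := (gf_act K).

Lemma twist_kummer_poly g :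
  twist c g ('X^n - b%:P) = delta0 b g *: ('X^n - b%:P).
Proof.
rewrite rmorphB /= twistXn twistC cn scalerBr scale_polyC.
by rewrite /delta0 divfK.
Qed.

Lemma kummer_extension_exists :
  exists (F : GField G) (iota : {rmorphism K -> F}) (alpha : F),
    [/\ smoothGF F, (forall g x, gf_act F g (iota x) = iota (act g x)),
        alpha ^+ n = iota b,
        (forall y : F, exists p, y = (map_poly iota p).[alpha]) &
        forall g, gf_act F g alpha = iota (c g) * alpha].
Proof.
have [q qI qP] : exists2 q, monic_irreducible_poly q & q %| 'X^n - b%:P.
  by apply: monic_irreducible_dvdp_exists; rewrite size_XnsubC.
have P0 : 'X^n - b%:P != 0 by rewrite -size_poly_gt0 size_XnsubC.
have q_stable g : q %| twist c g q.
  apply: (noF (twist_stabilizer_subgroup c0 c_cocycle q)).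
  - exact: twist_stabilizer_open.
  apply: (twist_stabilizer_finite_index c0 c_cocycle P0 _ qI.1 qP) => h.
  by exists (delta0 b h); [exact: delta0_neq0 | exact: twist_kummer_poly].
exists (kummer_gfield c0 c_cocycle qI q_stable), (in_alg (kummer_field qI)).
exists (kummer_root qI); split.
- exact: kummer_gfield_smooth.
- exact: kummer_gfield_in_alg.
- exact: kummer_rootX.
- exact: kummer_field_generated.
- exact: kummer_root_act.
Qed.

End KummerExtension.

Lemma invertible_object_in_kummer_ext (G : permGroup) (K : GField G) (n : nat) :
  smoothGF K -> (0 < n)%N -> no_proper_open_finite_index G ->
  forall (V : lmodType K) (actV : G -> V -> V),
    invertible_object actV -> pic_order actV n ->
    exists a : K, ginv_class n a /\ contained_in_kummer_ext n a actV.
Proof.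
move=> smK n_gt0 noF V actV [smV _].
move=> [v [c [v0 v_span actV_v [_ [b [b0 cn]]] _]]].
have [c0 c_cocycle lcc] := smooth_module_cocycle smV v0 actV_v.
have {}cn g : c g ^+ n = delta0 b g by rewrite cn mul1r.
have [F [iota [alpha [smF iotaE alphan gen alphaE]]]] :=
  kummer_extension_exists smK n_gt0 noF c0 c_cocycle lcc b0 cn.
have alpha0 : alpha != 0.
  have := b0; apply: contra_neq => alpha_0; apply: (fmorph_inj iota).
  by rewrite -alphan alpha_0 expr0n gtn_eqF //; exact/esym/rmorph0.
exists b; split.
  by split=> // g; exists (c g); split => //; rewrite cn /delta0 mulrC divfK.
exists F, iota, alpha; split => //.
exact: (line_embedding smV v0 actV_v v_span alpha0 iotaE alphaE).
Qed.

Theorem proposition5p21 (G : permGroup) (K : GField G) (n : nat) :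
  smoothGF K -> (0 < n)%N ->
  @kummer_exact_sequence G K n /\
  (no_proper_open_finite_index G ->
   forall (V : lmodType K) (actV : G -> V -> V),
     @invertible_object G K V actV -> @pic_order G K V actV n ->
     exists a : K, @ginv_class G K n a /\ @contained_in_kummer_ext G K n a V actV).
Proof.
move=> smK n_gt0; split; first exact: kummer_sequence_exact.
exact: invertible_object_in_kummer_ext.
Qed.
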